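(* Let $P$ be an abelian group, $s\in\mathbb R_{>0}$, and $h\colon P\to\mathbb R$ such that for all $L_0,\dots,L_r\in P$, as $|m|\to\infty$ with $m\in\mathbb Z^r$, $h(\sum_im_iL_i)=O(|m|^s)$ and $h(L_0+\sum_im_iL_i)-h(\sum_im_iL_i)=O(|m|^{s-1})$. Let $\hat h\colon P_{\mathbb R}\to\mathbb R$ be the unique function with $\hat h(L)=\limsup_{m\to\infty}m^{-s}h(mL)$ for $L\in P$, homogeneous of degree $s$ under $\mathbb R_{\ge0}$, and continuous on finite-dimensional subspaces. Fix $L_1,\dots,L_r\in P$, write $\hat h(x)=\hat h(\sum_ix_iL_i)$ and $f_m(x)=m^{-s}h(\sum_i\lfloor mx_i\rfloor L_i)$ for $x\in\mathbb R^r$, $m\in\mathbb N_{>0}$. Then: (i) for all $x\in\mathbb R^r$, $\hat h(x)=\limsup_{m\to\infty}f_m(x)$; (ii) if $\sigma\subset\mathbb R^r$ is an open convex cone such that $\lim_{m\to\infty}f_m(x)=\hat h(x)$ for all $x\in\sigma\cap\mathbb Z^r$, then $\lim_{m\to\infty}f_m(x)=\hat h(x)$ for all $x\in\overline\sigma$.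
   Context: $P_{\mathbb R}=P\otimes_{\mathbb Z}\mathbb R$, the image of $L\in P$ is still written $L$, and $|m|=\sum_i|m_i|$; the implied constants may depend on $L_0,\dots,L_r$. *)

From HB Require Import structures.
From mathcomp Require Import all_boot all_order all_algebra.
From mathcomp Require Import all_classical all_reals all_analysis.
Set Implicit Arguments. Unset Strict Implicit. Unset Printing Implicit Defensive.
Import Order.TTheory GRing.Theory Num.Theory.
Import numFieldNormedType.Exports.
Local Open Scope classical_set_scope.
Local Open Scope ring_scope.

Definition l1norm (R : realType) (r : nat) (m : 'I_r -> int) : R :=
  \sum_(i < r) `|m i|%:~R.

Definition zcomb (P : zmodType) (r : nat) (m : 'I_r -> int) (L : 'I_r -> P) : P :=
  \sum_(i < r) (L i *~ m i).

Definition growth_hyp (R : realType) (P : zmodType) (s : R) (h : P -> R) : Prop :=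
  forall (r : nat) (L0 : P) (L : 'I_r -> P),
    (exists C M : R, forall m : 'I_r -> int, M <= l1norm R m ->
        `|h (zcomb m L)| <= C * (l1norm R m) `^ s) /\
    (exists C M : R, forall m : 'I_r -> int, M <= l1norm R m ->
        `|h (L0 + zcomb m L) - h (zcomb m L)| <= C * (l1norm R m) `^ (s - 1)).

(* (V, iota) is P (x)_Z R: universal property of the tensor product with R
   among real vector spaces. *)
Definition is_tensor_R (R : realType) (P : zmodType) (V : lmodType R)
    (iota : {additive P -> V}) : Prop :=
  forall (W : lmodType R) (g : {additive P -> W}),
    exists f : {linear V -> W},
      (forall p, f (iota p) = g p) /\
      (forall f' : {linear V -> W}, (forall p, f' (iota p) = g p) -> f' =1 f).

Definition is_hhat (R : realType) (P : zmodType) (s : R) (h : P -> R)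
    (V : lmodType R) (iota : {additive P -> V}) (hh : V -> R) : Prop :=
  [/\
      (forall L : P, (hh (iota L))%:E =
         limn_esup (fun m : nat => (((m%:R) `^ s)^-1 * h (L *+ m))%:E)),
      (forall (t : R) (v : V), 0 <= t -> hh (t *: v) = t `^ s * hh v) &
      (forall (k : nat) (v : 'I_k -> V),
         continuous (fun y : 'rV[R]_k => hh (\sum_(j < k) y ord0 j *: v j)))].

Definition fseq (R : realType) (P : zmodType) (s : R) (h : P -> R) (r : nat)
    (L : 'I_r -> P) (m : nat) (x : 'rV[R]_r) : R :=
  ((m%:R) `^ s)^-1 * h (\sum_(i < r) (L i *~ Num.floor (m%:R * x ord0 i))).

Definition hhat_r (R : realType) (P : zmodType) (V : lmodType R)
    (iota : {additive P -> V}) (hh : V -> R) (r : nat) (L : 'I_r -> P)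
    (x : 'rV[R]_r) : R :=
  hh (\sum_(i < r) x ord0 i *: iota (L i)).

Definition open_convex_cone (R : realType) (r : nat) (sigma : set 'rV[R]_r) : Prop :=
  [/\ open sigma,
      (forall x y, sigma x -> sigma y -> forall t : R, 0 <= t <= 1 ->
          sigma (t *: x + (1 - t) *: y)) &
      (forall x, sigma x -> forall t : R, 0 < t -> sigma (t *: x))].

Definition intpoint (R : realType) (r : nat) (x : 'rV[R]_r) : Prop :=
  forall i, x ord0 i \is a Num.int.

From HB Require Import structures.
From mathcomp Require Import all_boot all_order all_algebra.
From mathcomp Require Import all_classical all_reals all_analysis.
From mathcomp Require Import zify ring lra.
Set Implicit Arguments. Unset Strict Implicit. Unset Printing Implicit Defensive.
Import Order.TTheory GRing.Theory Num.Theory.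
Import numFieldNormedType.Exports.
Local Open Scope classical_set_scope.
Local Open Scope ring_scope.

(* Fix x with a nonzero coordinate.  Taking for L0 the 3^r combinations of the
   L_i with coefficients in {-1, 0, 1}, the growth hypothesis shows that a unit
   move of the argument changes h by O(N^(s-1)) near the ray through N x, where
   all coefficient vectors have size of order N.  Summing along segments gives
   f_m(x) = (k/m)^s f_k(c) + O(|x - c/q|) + o(1) whenever m is within q of q k,
   so asymptotic bounds on f_k(c) pass to f_m(x) with the factor q^(-s).  By
   homogeneity q^(-s) hat h(c) = hat h(c/q), which is close to hat h(x) by
   continuity, and for the lattice point c the limsup formula for hat h on P
   applies.  For (ii), the c/q approximating a point of the closure of sigma
   can be taken in the open cone sigma, hence so can c. *)

Section RealFacts.
Variable R : realType.
Implicit Types (a b d q t : R) (u : nat -> R).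

Lemma ler_sum_norm (T : finType) (F : T -> R) (i : T) : F i <= \sum_j `|F j|.
Proof. by rewrite (bigD1 i) //= (le_trans (ler_norm _)) // ler_wpDr // sumr_ge0. Qed.

Lemma norm_floorB_le1 a b :
  `|a - b| <= 1 -> `|Num.floor a - Num.floor b| <= 1.
Proof.
rewrite ler_norml => /andP[ab1 ab2].
have /andP[a1 a2] := floor_itv a; have /andP[b1 b2] := floor_itv b.
rewrite !intrD in a2 b2.
have up : (Num.floor a - Num.floor b)%:~R < 2%:~R :> R by rewrite intrB; lra.
have lo : (-2)%:~R < (Num.floor a - Num.floor b)%:~R :> R by rewrite intrB; lra.
rewrite ltr_int in up; rewrite ltr_int in lo.
rewrite ler_norml; apply/andP; split; lia.
Qed.

Lemma norm_floor_ge a : `|a| - 1 <= `|(Num.floor a)%:~R|.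
Proof.
have /andP[f1 f2] := floor_itv a; rewrite intrD in f2.
rewrite lerBlDr.
have := ler_normD (Num.floor a)%:~R (a - (Num.floor a)%:~R); rewrite addrC subrK.
move/le_trans; apply.
by rewrite lerD2l ger0_norm ?subr_ge0 //; lra.
Qed.

Lemma norm_floor_le a : `|(Num.floor a)%:~R| <= `|a| + 1.
Proof.
have /andP[f1 f2] := floor_itv a; rewrite intrD in f2.
have := ler_normD a ((Num.floor a)%:~R - a); rewrite addrC subrK.
move/le_trans; apply.
by rewrite lerD2l ler0_norm ?subr_le0 //; lra.
Qed.

Lemma dist_floor_div q a : 0 < q -> `|a - (Num.floor (q * a))%:~R / q| <= q^-1.
Proof.
move=> q0; have /andP[f1 f2] := floor_itv (q * a); rewrite intrD in f2.
have -> : a - (Num.floor (q * a))%:~R / q = (q * a - (Num.floor (q * a))%:~R) / q.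
  by field; rewrite gt_eqF.
rewrite normrM normfV (gtr0_norm q0) -[leRHS]mul1r ler_pM2r ?invr_gt0 //.
by rewrite ger0_norm ?subr_ge0 //; lra.
Qed.

Lemma ler_dist_telescope u n d :
  (forall j, (j < n)%N -> `|u j.+1 - u j| <= d) -> `|u n - u 0%N| <= n%:R * d.
Proof.
elim: n => [|n IH] H; first by rewrite subrr normr0 mul0r.
rewrite -(subrKA (u n)) -nat1r mulrDl mul1r.
apply: le_trans (ler_normD _ _) (lerD (H n _) (IH _)) => // j jn.
by apply: H; rewrite ltnS ltnW.
Qed.

Lemma ler_norm_convex t a b d :
  0 <= t <= 1 -> `|a| <= d -> `|b| <= d -> `|(1 - t) * a + t * b| <= d.
Proof.
move=> /andP[t0 t1] ha hb; apply: le_trans (ler_normD _ _) _.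
rewrite !normrM (ger0_norm t0) ger0_norm ?subr_ge0 //.
have := normr_ge0 a; have := normr_ge0 b; nra.
Qed.

Lemma powR_le_bounds a t b p : 0 < a -> a <= t -> t <= b ->
  t `^ p <= a `^ p + b `^ p.
Proof.
move=> a0 le_at le_tb; have t0 : 0 < t by apply: lt_le_trans le_at.
have [p0|p0] := leP 0 p.
  apply: (@le_trans _ _ (b `^ p)); last by rewrite lerDr powR_ge0.
  by apply: ge0_ler_powR => //; rewrite nnegrE ltW // (lt_le_trans t0).
apply: (@le_trans _ _ (a `^ p)); last by rewrite lerDl powR_ge0.
rewrite -[p]opprK (powRN t) (powRN a) lef_pV2 ?posrE ?powR_gt0 //.
by apply: ge0_ler_powR; rewrite ?nnegrE; lra.
Qed.

Lemma powR_invr a p : 0 < a -> a^-1 `^ p = (a `^ p)^-1.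
Proof.
move=> a0; apply: (@mulIf _ (a `^ p)); first by rewrite gt_eqF // powR_gt0.
by rewrite mulVf ?gt_eqF ?powR_gt0 // -powRM ?invr_ge0 ?ltW // mulVf ?gt_eqF // powR1.
Qed.

Lemma eventually_ltr_nat a : exists N, forall m, (N <= m)%N -> a < m%:R.
Proof.
exists (Num.bound `|a|) => m Nm; apply: le_lt_trans (ler_norm a) _.
by apply: lt_le_trans (archi_boundP (normr_ge0 a)) _; rewrite ler_nat.
Qed.

Lemma cvg_powR_invM p a : 0 < p -> (m%:R `^ p)^-1 * a @[m --> \oo] --> 0.
Proof.
move=> p0; apply/cvgrPdist_le => e e0.
set X := (`|a| + 1) / e.
have X0 : 0 < X by rewrite divr_gt0 // ltr_wpDl.
have [N HN] := eventually_ltr_nat (X `^ p^-1).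
exists N => // m /= /HN Hm; rewrite sub0r normrN.
have m0 : 0 < m%:R :> R by apply: le_lt_trans Hm; exact: powR_ge0.
have mp0 : 0 < m%:R `^ p :> R by rewrite powR_gt0.
have Xm : X <= m%:R `^ p.
  have -> : X = (X `^ p^-1) `^ p by rewrite -powRrM mulVf ?gt_eqF // powRr1 // ltW.
  by apply: ge0_ler_powR; rewrite ?nnegrE ?powR_ge0 ?(ltW p0) ?(ltW m0) // ltW.
rewrite normrM ger0_norm ?invr_ge0 ?(ltW mp0) // mulrC ler_pdivrMr //.
by move: Xm; rewrite ler_pdivrMr // mulrC; lra.
Qed.

Lemma limn_esup_EFinP u l :
  limn_esup (EFin \o u) = l%:E <->
  (forall e, 0 < e -> (exists N, forall m, (N <= m)%N -> u m <= l + e) /\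
     (forall N, exists m, (N <= m)%N /\ l - e <= u m)).
Proof.
rewrite limn_esup_lim (cvg_lim _ (@cvg_esups_inf _ (EFin \o u))) //.
split.
- move=> Hinf e e0; split.
  + have : (ereal_inf (range (esups (EFin \o u))) < (l + e)%:E)%E.
      by rewrite Hinf lte_fin ltrDl.
    move=> /ereal_inf_lt[_ [N _ <-]] HN; exists N => m Nm.
    rewrite -lee_fin; apply: le_trans (ltW HN).
    by apply: ereal_sup_ubound; exists m.
  + move=> N.
    have : ((l - e)%:E < esups (EFin \o u) N)%E.
      apply: (@lt_le_trans _ _ l%:E); first by rewrite lte_fin ltrBlDr ltrDl.
      by rewrite -Hinf; apply: ereal_inf_lbound; exists N.
    move=> /ereal_sup_gt[_ [m /= Nm <-]] Hm; exists m; split => //.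
    by rewrite -lee_fin ltW.
- move=> H; apply/eqP; rewrite eq_le; apply/andP; split.
  + apply/lee_addgt0Pr => e e0; have [[N HN] _] := H e e0.
    apply: (@le_trans _ _ (esups (EFin \o u) N)).
      by apply: ereal_inf_lbound; exists N.
    by apply: ge_ereal_sup => _ [m /= Nm <-]; rewrite -EFinD lee_fin HN.
  + apply: le_ereal_inf_tmp => _ [N _ <-]; apply/lee_subgt0Pr => e e0.
    have [_ /(_ N)[m [Nm Hm]]] := H e e0.
    apply: (@le_trans _ _ (u m)%:E); first by rewrite -EFinB lee_fin.
    by apply: ereal_sup_ubound; exists m.
Qed.

Lemma limn_esup_EFin_cvg u l : u m @[m --> \oo] --> l -> limn_esup (EFin \o u) = l%:E.
Proof.
move=> ul; rewrite limn_esup_lim; apply/cvg_lim => //; apply/cvg_esups.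
by apply: cvg_EFin; [exact: nearW | exact: ul].
Qed.

Lemma ball_rowP (r : nat) (x y : 'rV[R]_r) e : 0 < e ->
  ball x e y <-> forall i, `|x ord0 i - y ord0 i| < e.
Proof.
move=> e0; split=> [[_ xy] i|xy]; first exact: xy.
by split=> // i j; rewrite (ord1 i); exact: xy.
Qed.

Lemma row_eq0_or_coord (r : nat) (x : 'rV[R]_r) : x = 0 \/ exists i, x ord0 i != 0.
Proof.
have [->|/matrix0Pn[i [j xij]]] := eqVneq x 0; first by left.
by right; exists j; rewrite (ord1 i) in xij.
Qed.

End RealFacts.

(* With g = f_.(x) and a = f_.(c), the comparison f_m(x) ~ (k/m)^s f_k(c)
   for m ~ q k through which asymptotic bounds on f_.(c) transfer to f_.(x). *)
Definition seq_approx (R : realType) (s : R) (g a : nat -> R) (q : nat) (E : R) :=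
  forall eta, 0 < eta -> exists N, forall m k : nat, (N <= m)%N -> (0 < k)%N ->
    `|m%:R - q%:R * k%:R : R| <= q%:R -> `|g m - (k%:R / m%:R) `^ s * a k| <= E + eta.

Section SeqApprox.
Variables (R : realType) (s : R).
Hypothesis s_gt0 : 0 < s.
Implicit Types (g a : nat -> R) (q : nat) (B E : R).

Lemma seq_approx_le g a q E E' : E <= E' ->
  seq_approx s g a q E -> seq_approx s g a q E'.
Proof.
move=> EE' ga eta /ga[N HN]; exists N => m k Nm k0 mk.
by apply: le_trans (HN m k Nm k0 mk) _; rewrite lerD2r.
Qed.

Lemma seq_approxN g a q E :
  seq_approx s g a q E -> seq_approx s (fun m => - g m) (fun k => - a k) q E.
Proof.
move=> ga eta /ga[N HN]; exists N => m k Nm k0 mk.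
by rewrite mulrN -opprD normrN; exact: HN.
Qed.

Lemma exists_multiple_weight q m B : (0 < q)%N -> (q <= m)%N ->
  exists k : nat, [/\ (0 < k)%N, (m %/ q <= k)%N, `|m%:R - q%:R * k%:R| <= q%:R :> R
    & (k%:R / m%:R) `^ s * B <= q%:R^-1 `^ s * B].
Proof.
move=> q0 qm; have m0 : (0 < m)%N by apply: leq_trans qm.
have qR0 : 0 < q%:R :> R by rewrite ltr0n.
have mR0 : 0 < m%:R :> R by rewrite ltr0n.
have lo : (q * (m %/ q) <= m)%N by rewrite mulnC leq_divM.
have hi : (m <= q * (m %/ q).+1)%N by rewrite mulnC ltnW // ltn_ceil.
have powR_le x y : 0 <= x -> x <= y -> x `^ s <= y `^ s.
  by move=> x0 xy; apply: ge0_ler_powR; rewrite ?nnegrE ?(ltW s_gt0) ?(le_trans x0).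
have [B0|B0] := leP 0 B.
- exists (m %/ q)%N; split; rewrite ?divn_gt0 //.
    rewrite -natrM ger0_norm ?subr_ge0 ?ler_nat // lerBlDr -natrD ler_nat.
    by apply: (leq_trans hi); rewrite mulnS addnC.
  apply: ler_wpM2r => //; apply: powR_le; first by rewrite divr_ge0.
  by rewrite ler_pdivrMr // mulrC ler_pdivlMr // -natrM ler_nat mulnC.
- exists (m %/ q).+1; split => //.
    rewrite -natrM ler0_norm ?subr_le0 ?ler_nat // opprB lerBlDr -natrD ler_nat.
    by rewrite mulnS leq_add2l.
  apply: ler_wnM2r; first exact: ltW.
  apply: powR_le; first by rewrite invr_ge0.
  by rewrite ler_pdivlMr // mulrC ler_pdivrMr // -natrM ler_nat mulnC.
Qed.

Lemma seq_approx_ub g a q E B : seq_approx s g a q E -> (0 < q)%N ->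
  (exists N, forall k, (N <= k)%N -> a k <= B) ->
  forall eta, 0 < eta -> exists N, forall m, (N <= m)%N ->
    g m <= q%:R^-1 `^ s * B + E + eta.
Proof.
move=> ga q0 [Na aB] eta /ga[N HN].
exists (N + q * Na + q)%N => m Nm.
have qm : (q <= m)%N by apply: leq_trans Nm; rewrite leq_addl.
have [k [k0 mqk mk wk]] := exists_multiple_weight B q0 qm.
have Nak : (Na <= k)%N.
  by apply: leq_trans mqk; rewrite leq_divRL // mulnC; apply: leq_trans Nm; lia.
have := HN m k (leq_trans (leq_trans (leq_addr _ _) (leq_addr _ _)) Nm) k0 mk.
have w0 : 0 <= (k%:R / m%:R) `^ s :> R by rewrite powR_ge0.
have := ler_wpM2l w0 (aB k Nak).
rewrite ler_norml => akB /andP[_ gm]; lra.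
Qed.

Lemma seq_approx_lb g a q E B : seq_approx s g a q E -> (0 < q)%N ->
  (exists N, forall k, (N <= k)%N -> B <= a k) ->
  forall eta, 0 < eta -> exists N, forall m, (N <= m)%N ->
    q%:R^-1 `^ s * B - E - eta <= g m.
Proof.
move=> /seq_approxN ga q0 [Na Ba] eta eta0.
have [|N HN] := seq_approx_ub ga q0 (B := - B) _ eta0.
  by exists Na => k /Ba; rewrite lerN2.
by exists N => m /HN; rewrite mulrN; lra.
Qed.

Lemma seq_approx_frequently g a q E B : seq_approx s g a q E -> (0 < q)%N ->
  (forall N, exists k, (N <= k)%N /\ B <= a k) ->
  forall eta, 0 < eta -> forall N, exists m, (N <= m)%N /\
    q%:R^-1 `^ s * B - E - eta <= g m.
Proof.
move=> ga q0 aB eta /ga[N1 HN1] N.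
have [k [Nk Bak]] := aB (N + N1 + 1)%N.
have k0 : (0 < k)%N by apply: leq_trans Nk; rewrite addn1.
have Nqk : (N + N1 <= q * k)%N.
  by apply: leq_trans (leq_pmull _ q0); apply: leq_trans Nk; rewrite leq_addr.
exists (q * k)%N; split; first exact: leq_trans (leq_addr _ _) Nqk.
have mk : `|(q * k)%:R - q%:R * k%:R : R| <= q%:R by rewrite natrM subrr normr0.
have := HN1 (q * k)%N k (leq_trans (leq_addl _ _) Nqk) k0 mk.
have -> : k%:R / (q * k)%:R = q%:R^-1 :> R.
  rewrite natrM.
  by field; rewrite !pnatr_eq0 -!lt0n q0 k0.
have w0 : 0 <= q%:R^-1 `^ s :> R by rewrite powR_ge0.
have := ler_wpM2l w0 Bak.
rewrite ler_norml => Bak' /andP[gm _]; lra.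
Qed.

Lemma seq_approx_limsup g a q E la : seq_approx s g a q E -> (0 < q)%N ->
  limn_esup (EFin \o a) = la%:E -> forall eta, 0 < eta ->
  (exists N, forall m, (N <= m)%N -> g m <= q%:R^-1 `^ s * la + E + eta) /\
  (forall N, exists m, (N <= m)%N /\ q%:R^-1 `^ s * la - E - eta <= g m).
Proof.
move=> ga q0 /limn_esup_EFinP a_la eta eta0.
set w := q%:R^-1 `^ s.
have w0 : 0 < w by rewrite powR_gt0 // invr_gt0 ltr0n.
have e2 : 0 < eta / 2 by rewrite divr_gt0.
have e0 : 0 < eta / 2 / w by rewrite divr_gt0.
have weta : w * (eta / 2 / w) = eta / 2 by field; rewrite gt_eqF.
have [a_ub a_freq] := a_la _ e0.
split.
- have [N HN] := seq_approx_ub ga q0 a_ub e2.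
  by exists N => m /HN; rewrite mulrDr weta -/w; lra.
- move=> N; have [m [Nm gm]] := seq_approx_frequently ga q0 a_freq e2 N.
  by exists m; split => //; move: gm; rewrite mulrBr weta -/w; lra.
Qed.

Lemma seq_approx_cvg g a q E la : seq_approx s g a q E -> (0 < q)%N ->
  a k @[k --> \oo] --> la -> forall eta, 0 < eta ->
  exists N, forall m, (N <= m)%N -> `|g m - q%:R^-1 `^ s * la| <= E + eta.
Proof.
move=> ga q0 /cvgrPdist_le a_la eta eta0.
set w := q%:R^-1 `^ s.
have w0 : 0 < w by rewrite powR_gt0 // invr_gt0 ltr0n.
have e2 : 0 < eta / 2 by rewrite divr_gt0.
have e0 : 0 < eta / 2 / w by rewrite divr_gt0.
have weta : w * (eta / 2 / w) = eta / 2 by field; rewrite gt_eqF.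
have [Na _ HNa] := a_la _ e0.
have [|N1 HN1] := seq_approx_ub ga q0 (B := la + eta / 2 / w) _ e2.
  by exists Na => k /HNa /=; rewrite ler_distlC => /andP[].
have [|N2 HN2] := seq_approx_lb ga q0 (B := la - eta / 2 / w) _ e2.
  by exists Na => k /HNa /=; rewrite ler_distlC => /andP[].
exists (N1 + N2)%N => m Nm.
have := HN1 m (leq_trans (leq_addr _ _) Nm); have := HN2 m (leq_trans (leq_addl _ _) Nm).
by rewrite !mulrDr mulrN weta -/w ler_distlC; lra.
Qed.

End SeqApprox.

Lemma zcombD (P : zmodType) (r : nat) (a b : 'I_r -> int) (L : 'I_r -> P) :
  zcomb (fun i => a i + b i) L = zcomb a L + zcomb b L.
Proof. by rewrite /zcomb -big_split /=; apply: eq_bigr => i _; rewrite mulrzDr. Qed.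

Lemma l1norm_ge0 (R : realType) (r : nat) (c : 'I_r -> int) : 0 <= l1norm R c.
Proof. by apply: sumr_ge0 => i _; rewrite intr_norm. Qed.

Lemma l1norm_ge_norm (R : realType) (r : nat) (c : 'I_r -> int) i :
  `|(c i)%:~R| <= l1norm R c.
Proof.
by rewrite /l1norm (bigD1 i) //= -intr_norm lerDl sumr_ge0 // => j _; rewrite intr_norm.
Qed.

Definition int_row (R : realType) (r : nat) (c : 'I_r -> int) : 'rV[R]_r :=
  \row_i (c i)%:~R.

Definition floorv (R : realType) (r : nat) (z : 'I_r -> R) : 'I_r -> int :=
  fun i => Num.floor (z i).

(* On this tube (with rho = |x0 i0| / 2) the floors have l1 norm between
   |x0 i0| N / 4 and O(N), so the bound O(|m|^(s-1)) of the growth hypothesis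
   becomes O(N^(s-1)) whatever the sign of s - 1. *)
Definition near_ray (R : realType) (r : nat) (x0 : 'I_r -> R) (rho N : R)
  (z : 'I_r -> R) := forall i, `|z i - N * x0 i| <= rho * N.

Lemma near_ray_segment (R : realType) (r : nat) (x0 : 'I_r -> R) rho N u v t :
  near_ray x0 rho N u -> near_ray x0 rho N v -> 0 <= t <= 1 ->
  near_ray x0 rho N (fun i => u i + t * (v i - u i)).
Proof.
move=> xu xv t01 i.
have -> : u i + t * (v i - u i) - N * x0 i =
  (1 - t) * (u i - N * x0 i) + t * (v i - N * x0 i) by ring.
exact: ler_norm_convex.
Qed.

Section HEstimates.
Variables (R : realType) (P : zmodType) (s : R) (h : P -> R) (r : nat) (L : 'I_r -> P).
Hypothesis growth : growth_hyp s h.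

Lemma h_zcomb_step : exists C M : R, 0 <= C /\ forall c c' : 'I_r -> int,
    (forall i, `|c' i - c i| <= 1) -> M <= l1norm R c ->
    `|h (zcomb c' L) - h (zcomb c L)| <= C * l1norm R c `^ (s - 1).
Proof.
(* One instance of the growth hypothesis per shift vector in {-1, 0, 1}^r. *)
pose shift (t : {ffun 'I_r -> 'I_3}) i : int := (t i)%:Z - 1.
have bound_shift t : exists CM : R * R, forall m, CM.2 <= l1norm R m ->
    `|h (zcomb (shift t) L + zcomb m L) - h (zcomb m L)|
      <= CM.1 * l1norm R m `^ (s - 1).
  by have [_ [C [M HM]]] := growth (zcomb (shift t) L) L; exists (C, M).
have [CM HCM] := boolp.choice bound_shift.
exists (\sum_t `|(CM t).1|), (\sum_t `|(CM t).2|); split; first exact: sumr_ge0.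
move=> c c' cc' Mc.
pose t : {ffun 'I_r -> 'I_3} := [ffun i => inord (absz (c' i - c i + 1))].
have shift_t i : shift t i = c' i - c i.
  have := cc' i; rewrite ler_norml => /andP[lo hi].
  rewrite /shift ffunE inordK; lia.
have -> : zcomb c' L = zcomb (shift t) L + zcomb c L.
  by rewrite -zcombD; congr zcomb; apply: boolp.funext => i; rewrite shift_t subrK.
apply: le_trans (HCM t c (le_trans (ler_sum_norm (fun t => (CM t).2) t) Mc)) _.
by rewrite ler_wpM2r ?powR_ge0 // (ler_sum_norm (fun t => (CM t).1) t).
Qed.

Section NearRay.
Variables (x0 : 'I_r -> R) (i0 : 'I_r).
Hypothesis x0_i0 : x0 i0 != 0.

Let a0 := `|x0 i0|.
Let a0_gt0 : 0 < a0. Proof. by rewrite normr_gt0. Qed.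

Lemma l1norm_floor_near_ray N z : 1 <= N -> 4 / a0 <= N ->
  near_ray x0 (a0 / 2) N z ->
  a0 / 4 * N <= l1norm R (floorv z) <= (\sum_i (`|x0 i| + a0 / 2 + 1)) * N.
Proof.
move=> N1 N4 zN; have N0 : 0 < N by apply: lt_le_trans N1.
apply/andP; split.
- apply: le_trans (le_trans (norm_floor_ge (z i0)) (l1norm_ge_norm _ _ i0)).
  have := lerB_dist (N * x0 i0) (z i0); have := zN i0.
  rewrite distrC normrM (ger0_norm (ltW N0)) -/a0.
  have : 4 <= a0 * N by move: N4; rewrite ler_pdivrMr // mulrC.
  lra.
- rewrite mulr_suml; apply: ler_sum => i _; rewrite intr_norm.
  apply: le_trans (norm_floor_le _) _.
  have := lerB_dist (z i) (N * x0 i); have := zN i.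
  rewrite normrM (ger0_norm (ltW N0)); have := normr_ge0 (x0 i); nra.
Qed.

Lemma h_floor_step : exists K N0 : R, 0 <= K /\ forall N, N0 <= N ->
  forall z z', near_ray x0 (a0 / 2) N z -> near_ray x0 (a0 / 2) N z' ->
  (forall i, `|z' i - z i| <= 1) ->
  `|h (zcomb (floorv z') L) - h (zcomb (floorv z) L)| <= K * N `^ (s - 1).
Proof.
have [C [M [C0 HCM]]] := h_zcomb_step.
set be := \sum_i (`|x0 i| + a0 / 2 + 1).
have be0 : 0 <= be.
  by apply: sumr_ge0 => i _; rewrite !addr_ge0 // divr_ge0 // ltW.
have al0 : 0 < a0 / 4 by rewrite divr_gt0.
exists (C * ((a0 / 4) `^ (s - 1) + be `^ (s - 1))), (1 + 4 / a0 + `|M| / (a0 / 4)).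
split; first by rewrite mulr_ge0 // addr_ge0 // powR_ge0.
move=> N HN z z' zN z'N zz'.
have t0 : 0 <= 4 / a0 by rewrite divr_ge0 // ltW.
have t1 : 0 <= `|M| / (a0 / 4) by rewrite divr_ge0 // ltW.
have N1 : 1 <= N by lra.
have N0 : 0 < N by lra.
have N4 : 4 / a0 <= N by lra.
have /andP[lo hi] := l1norm_floor_near_ray N1 N4 zN.
have MN : M <= a0 / 4 * N.
  have : `|M| / (a0 / 4) <= N by lra.
  by rewrite ler_pdivrMr // mulrC; apply: le_trans (ler_norm M).
apply: le_trans (HCM _ _ (fun i => norm_floorB_le1 (zz' i)) (le_trans MN lo)) _.
rewrite -mulrA ler_wpM2l //.
apply: le_trans (powR_le_bounds _ (mulr_gt0 al0 N0) lo hi) _.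
by rewrite (powRM _ (ltW al0) (ltW N0)) (powRM _ be0 (ltW N0)) mulrDl.
Qed.

Lemma h_floor_lipschitz : exists K N0 : R, 0 <= K /\ forall N, N0 <= N ->
  forall u v, near_ray x0 (a0 / 2) N u -> near_ray x0 (a0 / 2) N v ->
  forall d, 0 <= d -> (forall i, `|u i - v i| <= d) ->
  `|h (zcomb (floorv u) L) - h (zcomb (floorv v) L)| <= K * N `^ (s - 1) * (d + 1).
Proof.
have [K [N0 [K0 step]]] := h_floor_step.
exists K, N0; split => // N N0N u v uN vN d d0 uv.
set n := (`|Num.floor d|%N).+1.
have n0 : 0 < n%:R :> R by rewrite ltr0n.
have [dn nd] : d < n%:R /\ n%:R <= d + 1.
  have /andP[f1 f2] := floor_itv d; rewrite intrD in f2.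
  have -> : n%:R = (Num.floor d)%:~R + 1 :> R.
    by rewrite /n -addn1 natrD natr_absz ger0_norm ?floor_ge0.
  lra.
pose z j i := u i + j%:R / n%:R * (v i - u i).
have zN j : (j <= n)%N -> near_ray x0 (a0 / 2) N (z j).
  move=> jn; apply: near_ray_segment => //.
  by rewrite divr_ge0 ?ler0n //= ler_pdivrMr // mul1r ler_nat.
have z0 : z 0%N = u by apply: boolp.funext => i; rewrite /z mul0r mul0r addr0.
have zn : z n = v.
  by apply: boolp.funext => i; rewrite /z divff ?gt_eqF // mul1r addrC subrK.
rewrite distrC -{1}z0 -{1}zn.
apply: le_trans (ler_dist_telescope
  (u := fun j => h (zcomb (floorv (z j)) L)) (d := K * N `^ (s - 1)) _) _.
- move=> j jn; apply: step (zN _ (ltnW jn)) (zN _ jn) _ => // i.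
  have -> : z j.+1 i - z j i = (v i - u i) / n%:R.
    by rewrite /z -nat1r; field; rewrite gt_eqF.
  rewrite normrM normfV (gtr0_norm n0) ler_pdivrMr // mul1r distrC.
  exact: le_trans (uv i) (ltW dn).
- by rewrite mulrC ler_wpM2l // mulr_ge0 // powR_ge0.
Qed.

End NearRay.

Lemma dist_multiple_int_row (x : 'I_r -> R) (c : 'I_r -> int) (q k m : nat) e i :
  (0 < q)%N -> `|m%:R - q%:R * k%:R| <= q%:R :> R ->
  `|x i - (c i)%:~R / q%:R| <= e ->
  `|k%:R * (c i)%:~R - m%:R * x i| <= m%:R * e + l1norm R c.
Proof.
move=> q0 mk xc; have qR0 : 0 < q%:R :> R by rewrite ltr0n.
have -> : k%:R * (c i)%:~R - m%:R * x i =
    m%:R * ((c i)%:~R / q%:R - x i) + (q%:R * k%:R - m%:R) / q%:R * (c i)%:~R.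
  by field; rewrite gt_eqF.
apply: le_trans (ler_normD _ _) _; apply: lerD.
  by rewrite normrM ger0_norm // ler_wpM2l // distrC.
rewrite normrM; apply: le_trans (l1norm_ge_norm R c i).
rewrite ler_piMl // normrM normfV (gtr0_norm qR0) ler_pdivrMr // mul1r.
by rewrite distrC.
Qed.

Lemma weighted_fseq_int_row (c : 'I_r -> int) (k m : nat) : (0 < k)%N -> (0 < m)%N ->
  (k%:R / m%:R) `^ s * fseq s h L k (int_row R c) =
  (m%:R `^ s)^-1 * h (zcomb (floorv (fun i => k%:R * (c i)%:~R : R)) L).
Proof.
move=> k0 m0; have kR0 : 0 < k%:R :> R by rewrite ltr0n.
have mR0 : 0 < m%:R :> R by rewrite ltr0n.
rewrite /fseq (powRM _ (ltW kR0)) ?invr_ge0 ?ltW // powR_invr // mulrA.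
have kp0 : k%:R `^ s != 0 :> R by rewrite gt_eqF ?powR_gt0.
rewrite [_ / _ / _]mulrAC mulfV // mul1r; congr (_ * h _).
by apply: eq_bigr => i _; rewrite mxE.
Qed.

Lemma fseq_lattice_dist (x : 'rV[R]_r) (i0 : 'I_r) : x ord0 i0 != 0 ->
  exists K N0 : R, 0 <= K /\ forall (q k m : nat) (c : 'I_r -> int) e,
    (0 < q)%N -> (0 < k)%N -> N0 <= m%:R -> 0 < m%:R :> R -> 0 <= e ->
    `|m%:R - q%:R * k%:R| <= q%:R :> R ->
    (forall i, `|x ord0 i - (c i)%:~R / q%:R| <= e) ->
    m%:R * e + l1norm R c <= `|x ord0 i0| / 2 * m%:R ->
    `|fseq s h L m x - (k%:R / m%:R) `^ s * fseq s h L k (int_row R c)|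
      <= K * e + K * (l1norm R c + 1) / m%:R.
Proof.
move=> xi0; have [K [N0 [K0 lip]]] := h_floor_lipschitz (x0 := fun i => x ord0 i) xi0.
exists K, N0; split => // q k m c e q0 k0 mN0 m0 e0 mk xc da.
set d := m%:R * e + l1norm R c.
have d0 : 0 <= d by rewrite addr_ge0 ?l1norm_ge0 // mulr_ge0 // ltW.
have km i : `|k%:R * (c i)%:~R - m%:R * x ord0 i| <= d.
  exact: dist_multiple_int_row q0 mk (xc i).
have hmain : `|h (zcomb (floorv (fun i => m%:R * x ord0 i : R)) L)
    - h (zcomb (floorv (fun i => k%:R * (c i)%:~R : R)) L)|
    <= K * m%:R `^ (s - 1) * (d + 1).
  apply: lip => // i.
  - by rewrite subrr normr0 mulr_ge0 // divr_ge0 // ltW.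
  - exact: le_trans (km i) da.
  - by rewrite distrC.
have m_gt0 : (0 < m)%N by rewrite -(ltr0n R).
have mp0 : 0 < m%:R `^ s by rewrite powR_gt0.
have mi0 : 0 <= (m%:R `^ s)^-1 by rewrite invr_ge0 ltW.
rewrite weighted_fseq_int_row // -mulrBr normrM ger0_norm //.
apply: le_trans (ler_wpM2l mi0 hmain) _.
rewrite powRB ?(gt_eqF m0) ?implybT // powRr1 ?(ltW m0) //.
rewrite le_eqVlt; apply/orP; left; apply/eqP.
by rewrite /d; field; rewrite !gt_eqF.
Qed.

Lemma fseq_seq_approx (x : 'rV[R]_r) (i0 : 'I_r) : x ord0 i0 != 0 ->
  exists K de : R, [/\ 0 <= K, 0 < de &
  forall (q : nat) (c : 'I_r -> int) (e : R), (0 < q)%N -> 0 <= e <= de ->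
    (forall i, `|x ord0 i - (c i)%:~R / q%:R| <= e) ->
    seq_approx s (fun m => fseq s h L m x) (fun k => fseq s h L k (int_row R c))
      q (K * e)].
Proof.
move=> xi0; have [K [N0 [K0 dist]]] := fseq_lattice_dist xi0.
set a0 := `|x ord0 i0|; have a00 : 0 < a0 by rewrite normr_gt0.
exists K, (a0 / 4); split => //; first by rewrite divr_gt0.
move=> q c e q0 /andP[e0 ea] xc eta eta0.
set Bc := l1norm R c; have Bc0 : 0 <= Bc := l1norm_ge0 R c.
have t1 : 0 <= 4 * Bc / a0 by rewrite divr_ge0 ?mulr_ge0 // ltW.
have t2 : 0 <= K * (Bc + 1) / eta by rewrite divr_ge0 ?mulr_ge0 ?addr_ge0 // ltW.
have [N HN] := eventually_ltr_nat (`|N0| + 1 + 4 * Bc / a0 + K * (Bc + 1) / eta).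
exists N => m k /HN mN k0 mk.
have := ler_norm N0; have := normr_ge0 N0 => N0a N0b.
have m0 : 0 < m%:R :> R by lra.
have mBc : Bc <= a0 / 4 * m%:R.
  have : 4 * Bc / a0 <= m%:R by lra.
  by rewrite ler_pdivrMr //; lra.
have mK : K * (Bc + 1) / m%:R <= eta.
  have : K * (Bc + 1) / eta <= m%:R by lra.
  by rewrite !ler_pdivrMr //; lra.
have me : m%:R * e <= m%:R * (a0 / 4) by rewrite ler_wpM2l // ltW.
apply: le_trans (dist q k m c e q0 k0 _ m0 e0 mk xc _) _; rewrite -/Bc -/a0; lra.
Qed.

End HEstimates.

Definition lattice_floor (R : realType) (r : nat) (q : nat) (x : 'rV[R]_r) :=
  floorv (fun i => q%:R * x ord0 i).

Section HHat.
Variables (R : realType) (P : zmodType) (s : R) (h : P -> R).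
Variables (V : lmodType R) (iota : {additive P -> V}) (hh : V -> R).
Variables (r : nat) (L : 'I_r -> P).
Hypothesis s_gt0 : 0 < s.
Hypothesis growth : growth_hyp s h.
Hypothesis hh_limn_esup : forall p : P, (hh (iota p))%:E =
  limn_esup (fun m : nat => ((m%:R `^ s)^-1 * h (p *+ m))%:E).
Hypothesis hh_homo : forall (t : R) (v : V), 0 <= t -> hh (t *: v) = t `^ s * hh v.
Hypothesis hh_cont : forall (k : nat) (v : 'I_k -> V),
  continuous (fun y : 'rV[R]_k => hh (\sum_(j < k) y ord0 j *: v j)).

Local Notation H := (hhat_r iota hh L).
Local Notation f := (fseq s h L).

Lemma hhat_rZ t x : 0 <= t -> H (t *: x) = t `^ s * H x.
Proof.
move=> t0; rewrite /hhat_r -hh_homo // scaler_sumr; congr hh.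
by apply: eq_bigr => i _; rewrite mxE scalerA.
Qed.

Lemma hhat_r0 : H 0 = 0.
Proof. by have := hhat_rZ 0 (lexx 0); rewrite scale0r powR0 ?gt_eqF // mul0r. Qed.

Lemma hhat_r_int_row c : H (int_row R c) = hh (iota (zcomb c L)).
Proof.
rewrite /hhat_r /zcomb raddf_sum; congr hh; apply: eq_bigr => i _.
by rewrite mxE raddfMz scaler_int.
Qed.

Lemma fseq_int_row k c : f k (int_row R c) = (k%:R `^ s)^-1 * h (zcomb c L *+ k).
Proof.
rewrite /fseq /zcomb -sumrMnl; congr (_ * h _); apply: eq_bigr => i _.
have -> : k%:R * int_row R c ord0 i = (c i * k%:Z)%:~R by rewrite mxE intrM mulrC.
by rewrite intrKfloor mulrzA -pmulrn.
Qed.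

Lemma hhat_r_limn_esup_int c :
  limn_esup (EFin \o fun k => f k (int_row R c)) = (H (int_row R c))%:E.
Proof.
rewrite hhat_r_int_row hh_limn_esup; congr limn_esup; apply: boolp.funext => k /=.
by rewrite fseq_int_row.
Qed.

Lemma fseq0_cvg : f m 0 @[m --> \oo] --> 0.
Proof.
have -> : (fun m => f m 0) = fun m => (m%:R `^ s)^-1 * h 0.
  apply: boolp.funext => m; rewrite /fseq big1 // => i _.
  by rewrite mxE mulr0 floor0 mulr0z.
exact: cvg_powR_invM.
Qed.

Lemma fseq_approx_lattice (x : 'rV[R]_r) (i0 : 'I_r) e :
  x ord0 i0 != 0 -> 0 < e -> exists2 eta, 0 < eta & forall x', ball x eta x' ->
  exists Q : nat, forall q : nat, (Q <= q)%N ->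
  [/\ (0 < q)%N, `|H x - q%:R^-1 `^ s * H (int_row R (lattice_floor q x'))| < e &
      seq_approx s (f^~ x) (f^~ (int_row R (lattice_floor q x'))) q e].
Proof.
move=> xi0 e0.
have [K [de [K0 de0 approx]]] := fseq_seq_approx L growth xi0.
have H_cont : continuous H by exact: hh_cont.
have /cvg_ballP/(_ e e0)/nbhs_ballP[etac etac0 H_near] := H_cont x.
set eps := Num.min (Num.min de etac) (e / (K + 1)).
have eps0 : 0 < eps by rewrite !lt_min de0 etac0 divr_gt0 // ltr_pwDr.
have [eps_de eps_etac] : eps <= de /\ eps <= etac by rewrite !ge_min !lexx !orbT.
have eps_e : K * eps <= e.
  have : eps <= e / (K + 1) by rewrite ge_min lexx orbT.
  rewrite ler_pdivlMr ?ltr_pwDr // => ?; nra.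
have eps2 : 0 < eps / 2 by rewrite divr_gt0.
exists (eps / 2) => // x' /(ball_rowP _ _ eps2) xx'.
have [Q HQ] := eventually_ltr_nat (2 / eps).
exists Q.+1 => q Qq; have q0 : (0 < q)%N by apply: leq_trans Qq.
have qR0 : 0 < q%:R :> R by rewrite ltr0n.
have qi0 : 0 < q%:R^-1 :> R by rewrite invr_gt0.
have q_eps : q%:R^-1 < eps / 2.
  have := HQ q (ltnW Qq); rewrite ltr_pdivrMr // => ?.
  by rewrite -[q%:R^-1]mul1r ltr_pdivrMr //; lra.
set c := lattice_floor q x'.
have xc i : `|x ord0 i - (c i)%:~R / q%:R| <= eps / 2 + q%:R^-1.
  rewrite -(subrKA (x' ord0 i)); apply: le_trans (ler_normD _ _) _.
  by apply: lerD; [exact: ltW | exact: dist_floor_div].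
split => //.
- rewrite -hhat_rZ ?invr_ge0 ?ler0n //; apply: H_near; apply/ball_rowP => // i.
  by rewrite !mxE mulrC; apply: le_lt_trans (xc i) _; lra.
- apply: seq_approx_le (approx q c _ q0 _ xc).
    by apply: le_trans eps_e; rewrite ler_wpM2l //; lra.
  by apply/andP; split; lra.
Qed.

Lemma hhat_r_limn_esup x : (H x)%:E = limn_esup (fun m => (f m x)%:E).
Proof.
have [->|[i0 xi0]] := row_eq0_or_coord x.
  by rewrite hhat_r0; apply/esym/limn_esup_EFin_cvg/fseq0_cvg.
apply/esym/limn_esup_EFinP => e e0.
have e3 : 0 < e / 3 by rewrite divr_gt0.
have [eta eta0 /(_ x (ballxx _ eta0))[Q /(_ Q (leqnn Q))[q0 Hx approx]]] :=
  fseq_approx_lattice xi0 e3.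
have [[N ub] freq] := seq_approx_limsup s_gt0 approx q0 (hhat_r_limn_esup_int _) e3.
move: Hx; rewrite ltr_norml => /andP[Hx1 Hx2].
split; first by exists N => m /ub; lra.
by move=> N'; have [m [N'm fm]] := freq N'; exists m; split => //; lra.
Qed.

Lemma fseq_cvg_closure (sigma : set 'rV[R]_r) : open_convex_cone sigma ->
  (forall x, sigma x -> intpoint x -> f m x @[m --> \oo] --> H x) ->
  forall x, closure sigma x -> f m x @[m --> \oo] --> H x.
Proof.
move=> [sigma_open _ sigma_cone] cvg_int x x_cl.
have [->|[i0 xi0]] := row_eq0_or_coord x; first by rewrite hhat_r0; exact: fseq0_cvg.
apply/cvgrPdist_le => e e0; have e3 : 0 < e / 3 by rewrite divr_gt0.
have [eta eta0 near_x] := fseq_approx_lattice xi0 e3.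
have [x' [sigma_x' /near_x[Q HQ]]] := x_cl _ (nbhsx_ballx x eta eta0).
have /nbhs_ballP[rho rho0 sigma_ball] := sigma_open x' sigma_x'.
have [q1 Hq1] := eventually_ltr_nat rho^-1.
set q := maxn Q q1; have [q0 Hx approx] := HQ q (leq_maxl _ _).
set c := lattice_floor q x'.
have qR0 : 0 < q%:R :> R by rewrite ltr0n.
have sigma_c : sigma (int_row R c).
  rewrite -[int_row R c]scale1r -(mulfV (lt0r_neq0 qR0)) -scalerA.
  apply: sigma_cone => //; apply: sigma_ball; apply/ball_rowP => // j.
  rewrite !mxE mulrC; apply: le_lt_trans (dist_floor_div _ qR0) _.
  by rewrite -(invrK rho) ltf_pV2 ?posrE ?invr_gt0 // Hq1 // leq_maxr.
have int_c : intpoint (int_row R c) by move=> j; rewrite mxE intr_int.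
have [N HN] := seq_approx_cvg s_gt0 approx q0 (cvg_int _ sigma_c int_c) e3.
exists N => // m /HN; move: Hx; rewrite !ler_distlC ltr_distlC => /andP[? ?] /andP[? ?].
by apply/andP; split; lra.
Qed.

End HHat.

Theorem propositionA5 (R : realType) (P : zmodType) (s : R) (h : P -> R)
  (V : lmodType R) (iota : {additive P -> V}) (hh : V -> R)
  (r : nat) (L : 'I_r -> P) :
  0 < s ->
  growth_hyp s h ->
  is_tensor_R iota ->
  is_hhat s h iota hh ->
  (forall x : 'rV[R]_r,
      (hhat_r iota hh L x)%:E =
        limn_esup (fun m : nat => (fseq s h L m x)%:E)) /\
  (forall sigma : set 'rV[R]_r,
      open_convex_cone sigma ->
      (forall x, sigma x -> intpoint x ->
         fseq s h L m x @[m --> \oo] --> hhat_r iota hh L x) ->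
      forall x, closure sigma x ->
         fseq s h L m x @[m --> \oo] --> hhat_r iota hh L x).
Proof.
(* hat h is only evaluated on the span of the iota (L i). *)
move=> s_gt0 growth _ [hh_limn_esup hh_homo hh_cont]; split.
- exact: hhat_r_limn_esup.
- exact: fseq_cvg_closure.
Qed.
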